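(* For every strongly binary $2$-matroid $Z$ there is a unique strongly binary $2$-sheltering matroid $Q$ such that $\mathcal Z(Q)=Z$.
   Context: Let $\Omega$ be a partition of a finite set $U$ into classes of size $2$. A subtransversal (transversal) meets every class in at most (exactly) one element. A transversal $2$-tuple is an ordered pair $\tau=(T_1,T_2)$ of disjoint transversals; each $t\in T_1$ corresponds to the unique $\bar t\in T_2$ with $\{t,\bar t\}\in\Omega$. For a $T_1\times T_2$ matrix $A$ over a field $\mathbb F$ that is skew-symmetric (i.e. $A_{s,\bar t}=-A_{t,\bar s}$ for all $s,t\in T_1$), $\mathcal Q(A,\tau,2)=(M,\Omega)$ where $M$ is the column matroid of $(I\mid A)$, rows indexed by $T_1$, identity columns indexed by $T_1$ and the columns of $A$ indexed by $T_2$; this is a $2$-sheltering matroid. A sheltering matroid is a pair $Q=(M,\Omega)$ with $M$ a matroid on $U$ such that for every independent subtransversal $I$ and every class $\{x,y\}$ disjoint from $I$, $I\cup\{x\}$ or $I\cup\{y\}$ is independent; $\mathcal Z(Q)$ denotes the multimatroid ($2$-matroid) on $(U,\Omega)$ whose independent sets are the independent subtransversals of $M$. A $2$-sheltering matroid $Q$ is strongly binary if $Q=\mathcal Q(A,\tau,2)$ for some transversal $2$-tuple $\tau$ and some skew-symmetric (equivalently, symmetric) matrix $A$ over $GF(2)$; a $2$-matroid $Z$ is strongly binary if $Z=\mathcal Z(Q)$ for some strongly binary $2$-sheltering matroid $Q$. Equality of sheltering matroids means equality of the matroids on $U$ together with the same partition $\Omega$. *)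

From HB Require Import structures.
From mathcomp Require Import all_boot all_order all_algebra.
Set Implicit Arguments. Unset Strict Implicit. Unset Printing Implicit Defensive.
Import GRing.Theory.
Local Open Scope ring_scope.

Section Defs.
Variable U : finType.

Definition is_2partition (Omega : {set {set U}}) : Prop :=
  partition Omega [set: U] /\ (forall w, w \in Omega -> #|w| = 2%N).

Definition subtransversal (Omega : {set {set U}}) (T : {set U}) : bool :=
  [forall w in Omega, #|T :&: w| <= 1]%N.

Definition transversal (Omega : {set {set U}}) (T : {set U}) : bool :=
  [forall w in Omega, #|T :&: w| == 1]%N.

Definition transversal_2tuple (Omega : {set {set U}}) (T1 T2 : {set U}) : bool :=
  [&& transversal Omega T1, transversal Omega T2 & [disjoint T1 & T2]].

Definition same_class (Omega : {set {set U}}) (x y : U) : bool :=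
  [exists w in Omega, (x \in w) && (y \in w)].

(* A : T1 x T2 matrix (entries outside T1 x T2 are irrelevant);
   skew-symmetric: A_{s, tbar} = - A_{t, sbar} for s, t in T1. *)
Definition skew_symmetric (R : pzRingType) (Omega : {set {set U}})
    (T1 T2 : {set U}) (A : U -> U -> R) : Prop :=
  forall s t s' t', s \in T1 -> t \in T1 -> s' \in T2 -> t' \in T2 ->
    same_class Omega s s' -> same_class Omega t t' -> A s t' = - A t s'.

(* Column of (I | A) indexed by u, as a vector indexed by rows T1. *)
Definition col_IA (R : pzRingType) (T1 : {set U}) (A : U -> U -> R) (u : U)
    : U -> R :=
  fun s => if s \in T1 then (if u \in T1 then (s == u)%:R else A s u) else 0.

Definition lin_indep (R : pzRingType) (v : U -> U -> R) (X : {set U}) : Prop :=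
  forall c : U -> R,
    (forall s, \sum_(u in X) c u * v u s = 0) -> forall u, u \in X -> c u = 0.

Definition is_matroid (M : {set {set U}}) : Prop :=
  [/\ set0 \in M,
      (forall X Y : {set U}, Y \in M -> X \subset Y -> X \in M) &
      (forall X Y : {set U}, X \in M -> Y \in M -> (#|X| < #|Y|)%N ->
         exists2 y, y \in Y :\: X & y |: X \in M)].

Definition is_sheltering (Omega : {set {set U}}) (M : {set {set U}}) : Prop :=
  is_matroid M /\
  forall (I : {set U}) (x y : U), I \in M -> subtransversal Omega I ->
    x != y -> [set x; y] \in Omega -> [disjoint I & [set x; y]] ->
    (x |: I \in M) \/ (y |: I \in M).

Definition Zof (Omega : {set {set U}}) (M : {set {set U}}) : {set {set U}} :=
  [set X in M | subtransversal Omega X].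

Definition GF2 := 'F_2.

Definition strongly_binary_shelter (Omega : {set {set U}}) (M : {set {set U}})
    : Prop :=
  is_sheltering Omega M /\
  exists T1 T2 : {set U}, exists A : U -> U -> GF2,
    [/\ transversal_2tuple Omega T1 T2, skew_symmetric Omega T1 T2 A &
        forall X : {set U}, X \in M <-> lin_indep (col_IA T1 A) X].

Definition strongly_binary_2matroid (Omega : {set {set U}}) (Z : {set {set U}})
    : Prop :=
  exists M, strongly_binary_shelter Omega M /\ Zof Omega M = Z.

End Defs.

(* Existence is given; uniqueness is the content.  Let Q = Q(A,(T,T2)) and
   Q' = Q(A',(T',T2')) be strongly binary with the same independent
   subtransversals.  The identity columns T of Q form an independent
   subtransversal, hence a basis of the column space of (I|A'), and expressing
   all columns of (I|A') in that basis represents M' as the column matroid of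
   (I|B) with rows T.  The matrix B is again skew-symmetric, because the linear
   relations c, d among the columns of a skew-symmetric representation are
   isotropic: sum_x c_x d_{bar x} = 0.  Finally the entries of a skew-symmetric
   matrix over GF(2) are determined by the independent subtransversals
   (T \ X) u bar X with |X| <= 2: such a set is independent iff the principal
   minor of A on X is nonzero, i.e. A_{s bar s} <> 0, resp.
   A_{s bar s} A_{t bar t} - A_{s bar t}^2 = A_{s bar s} A_{t bar t} - A_{s bar t} <> 0.
   Hence A = B and M = M'. *)

From Pilot Require Import Defs.
From mathcomp Require Import all_boot all_order all_algebra.
From mathcomp Require Import ring.
Set Implicit Arguments. Unset Strict Implicit. Unset Printing Implicit Defensive.
Import GRing.Theory.
Local Open Scope ring_scope.

Section TwoPartition.
Variables (U : finType) (Omega : {set {set U}}).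
Hypothesis HOmega : is_2partition Omega.

Let partition_Omega : partition Omega [set: U]. Proof. by case: HOmega. Qed.

Lemma pblock_in_Omega x : pblock Omega x \in Omega.
Proof. by apply: pblock_mem; rewrite (cover_partition partition_Omega). Qed.

Lemma mem_pblock_self x : x \in pblock Omega x.
Proof. by rewrite mem_pblock (cover_partition partition_Omega). Qed.

Lemma same_classE x y : same_class Omega x y = (y \in pblock Omega x).
Proof.
have tiO : trivIset Omega by case/and3P: partition_Omega.
apply/existsP/idP => [[w /and3P [wO xw yw]] | yx].
  by rewrite (def_pblock tiO wO xw).
by exists (pblock Omega x); rewrite pblock_in_Omega mem_pblock_self.
Qed.

Lemma same_class_sym x y : same_class Omega x y = same_class Omega y x.
Proof. by apply/existsP/existsP => -[w /and3P [? ? ?]]; exists w; apply/and3P. Qed.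

Definition bar x := odflt x [pick y in pblock Omega x :\ x].

Lemma pblock_setD1 x : pblock Omega x :\ x = [set bar x].
Proof.
have /cards1P [z Ez] : #|pblock Omega x :\ x| == 1%N.
  have := HOmega.2 _ (pblock_in_Omega x).
  by rewrite (cardsD1 x) mem_pblock_self add1n => -[->].
by rewrite /bar Ez /pick enum_set1.
Qed.

Lemma pblock_bar x : pblock Omega x = [set x; bar x].
Proof. by rewrite -pblock_setD1 setD1K ?mem_pblock_self. Qed.

Lemma bar_neq x : bar x != x.
Proof. by have := set11 (bar x); rewrite -pblock_setD1 => /setD1P []. Qed.

Lemma same_class_bar x : same_class Omega x (bar x).
Proof. by rewrite same_classE pblock_bar !inE eqxx orbT. Qed.

Lemma same_classP x y : same_class Omega x y -> y = x \/ y = bar x.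
Proof. by rewrite same_classE pblock_bar => /set2P. Qed.

Lemma barK : involutive bar.
Proof.
move=> x; have := same_class_bar x; rewrite same_class_sym.
by case/same_classP => [/eqP | <-//]; rewrite eq_sym (negbTE (bar_neq x)).
Qed.

Lemma bar_inj : injective bar.
Proof. exact: inv_inj barK. Qed.

Lemma transversal_is_transversal T :
  Defs.transversal Omega T -> is_transversal T Omega [set: U].
Proof. by move=> tT; rewrite /is_transversal partition_Omega subsetT. Qed.

Lemma transversal_bar T x : Defs.transversal Omega T -> (bar x \in T) = (x \notin T).
Proof.
move/transversal_is_transversal => tT.
have /setP := setI_transversal_pblock tT x (pblock_in_Omega x).
move: (transversal_repr _ _ _) => r E.
have := E r; have := E x; have := E (bar x).
rewrite !inE pblock_bar !inE !eqxx orbT !andbT => -> -> /andP [_ /orP [] /eqP ->].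
  by rewrite eqxx (negbTE (bar_neq x)).
by rewrite eqxx eq_sym (negbTE (bar_neq x)).
Qed.

Lemma subtransversalP (Y : {set U}) :
  {in Y, forall x, bar x \notin Y} -> subtransversal Omega Y.
Proof.
move=> YO; apply/forall_inP => w wO; apply/card_le1_eqP => x y.
rewrite !inE => /andP [xY xw] /andP [yY yw].
have : same_class Omega x y by apply/existsP; exists w; rewrite wO xw yw.
by case/same_classP => // yx; move: (YO x xY); rewrite -yx yY.
Qed.

End TwoPartition.

Section ColumnFamilies.
Variables (U : finType) (R : pzRingType).
Implicit Types (v w C : U -> U -> R) (S T X Y : {set U}).

Lemma eq_lin_indep v w X : (forall u s, v u s = w u s) -> lin_indep v X <-> lin_indep w X.
Proof.
by move=> vw; split=> vX c cX; apply: vX => s; rewrite -[RHS](cX s);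
  apply: eq_bigr => u _; rewrite vw.
Qed.

Lemma col_IA_out T C u s : s \notin T -> col_IA T C u s = 0.
Proof. by rewrite /col_IA => /negbTE ->. Qed.


Lemma sum_col_IA_sub T S C (c : U -> R) s : S \subset T ->
  \sum_(u in S) c u * col_IA T C u s = if s \in S then c s else 0.
Proof.
move=> /subsetP ST; case: ifP => sS.
  rewrite (bigD1 s) //= big1 => [|u /andP [uS us]].
    by rewrite /col_IA ST // eqxx mulr1 addr0.
  by rewrite /col_IA ST // ST // eq_sym (negbTE us) mulr0.
apply: big1 => u uS; rewrite /col_IA (ST u uS); case: ifP => _; last by rewrite mulr0.
by case: (s =P u) => [su|_]; [rewrite su uS in sS | rewrite mulr0].
Qed.

Lemma lin_indep_col_IA T C : lin_indep (col_IA T C) T.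
Proof. by move=> c cT u uT; rewrite -(cT u) sum_col_IA_sub // uT. Qed.

Lemma sum_col_IA_disjoint T Y C (c : U -> R) s : [disjoint Y & T] ->
  \sum_(u in Y) c u * col_IA T C u s =
    if s \in T then \sum_(u in Y) c u * C s u else 0.
Proof.
move=> YT; rewrite /col_IA; case: ifP => _; last by rewrite big1 // => u _; rewrite mulr0.
by apply: eq_bigr => u uY; rewrite (disjointFr YT uY).
Qed.

Lemma lin_indep_pivot T X Y C : X \subset T -> [disjoint Y & T] ->
  lin_indep (col_IA T C) ((T :\: X) :|: Y) <-> lin_indep (col_IA X C) Y.
Proof.
move=> XT YT; have YX : [disjoint Y & X] by apply: disjointWr YT.
have TXY : [disjoint T :\: X & Y].
  by rewrite disjoint_sym; apply: disjointWr YT; apply: subsetDl.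
have sumE (c : U -> R) s : \sum_(u in (T :\: X) :|: Y) c u * col_IA T C u s =
    (if s \in T :\: X then c s else 0) +
    (if s \in T then \sum_(u in Y) c u * C s u else 0).
  rewrite (eq_bigl [predU T :\: X & Y]) => [|u]; last by rewrite !inE.
  by rewrite bigU // sum_col_IA_sub ?subsetDl // sum_col_IA_disjoint.
split=> [indep c cY u uY | indep c cTXY].
  pose c' x := if x \in Y then c x else - \sum_(v in Y) c v * C x v.
  have c'Y s : \sum_(v in Y) c' v * C s v = \sum_(v in Y) c v * C s v.
    by apply: eq_bigr => v vY; rewrite /c' vY.
  suff : c' u = 0 by rewrite /c' uY.
  apply: (indep c') => [s|]; last by rewrite inE uY orbT.
  rewrite sumE c'Y !inE; have := cY s; rewrite sum_col_IA_disjoint //.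
  case: (boolP (s \in X)) => sX; first by rewrite (subsetP XT) //= add0r.
  case: (boolP (s \in T)) => sT //= _; last by rewrite addr0.
  by rewrite /c' (disjointFl YT sT) addNr.
have cY : {in Y, forall u, c u = 0}.
  apply: indep => r; rewrite sum_col_IA_disjoint //; case: ifP => // rX.
  by have := cTXY r; rewrite sumE !inE rX (subsetP XT) //= add0r.
move=> u; rewrite inE => /orP [uTX|]; last exact: cY.
have := cTXY u; rewrite sumE uTX (subsetP (subsetDl T X)) // big1 ?addr0 //.
by move=> v vY; rewrite cY // mul0r.
Qed.

Lemma lin_indep_set1 v u :
  lin_indep v [set u] <-> forall x, (forall s, x * v u s = 0) -> x = 0.
Proof.
split=> [indep x xv | indep c cv _ /set1P ->].
  by apply: (indep (fun=> x) _ u (set11 u)) => s; rewrite big_set1.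
by apply: indep => s; rewrite -(cv s) big_set1.
Qed.

Lemma lin_indep_set2 v u1 u2 : u1 != u2 ->
  lin_indep v [set u1; u2] <->
  forall x y, (forall s, x * v u1 s + y * v u2 s = 0) -> x = 0 /\ y = 0.
Proof.
move=> u12; have sumE (c : U -> R) s :
    \sum_(u in [set u1; u2]) c u * v u s = c u1 * v u1 s + c u2 * v u2 s.
  by rewrite big_setU1 ?inE // big_set1.
split=> [indep x y xyv | indep c cv].
  pose c u := if u == u1 then x else y.
  have cv s : \sum_(u in [set u1; u2]) c u * v u s = 0.
    by rewrite sumE /c eqxx eq_sym (negbTE u12).
  have := indep c cv u1; have := indep c cv u2.
  by rewrite /c eqxx eq_sym (negbTE u12) !inE !eqxx orbT => -> // ->.
have [c1 c2] := indep (c u1) (c u2) (fun s => etrans (esym (sumE c s)) (cv s)).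
by move=> u /set2P [] ->.
Qed.

Lemma lin_indep_coords v w T :
  lin_indep v T -> (forall u r, r \notin T -> w u r = 0) ->
  (forall u x, v u x = \sum_(r in T) w u r * v r x) ->
  forall X, lin_indep v X <-> lin_indep w X.
Proof.
move=> indepT wT vw X.
have sumE (c : U -> R) x : \sum_(u in X) c u * v u x =
    \sum_(r in T) (\sum_(u in X) c u * w u r) * v r x.
  under eq_bigr do rewrite vw mulr_sumr.
  rewrite exchange_big; apply: eq_bigr => r _; rewrite mulr_suml.
  by apply: eq_bigr => u _; rewrite mulrA.
split=> indepX c cX; apply: indepX.
  by move=> x; rewrite sumE big1 // => r _; rewrite cX mul0r.
move=> r; case: (boolP (r \in T)) => rT; last by rewrite big1 // => u _; rewrite wT ?mulr0.
by apply: (indepT (fun r => \sum_(u in X) c u * w u r)) => // x; rewrite -sumE.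
Qed.

End ColumnFamilies.

Lemma det2_neq0 (R : fieldType) (a b c d : R) :
  (forall x y, x * a + y * b = 0 -> x * c + y * d = 0 -> x = 0 /\ y = 0) <->
  a * d - b * c != 0.
Proof.
split=> [indep | det x y row1 row2].
  apply: contraPneq (indep) => det0.
  have [ab0|] := boolP ((a == 0) && (b == 0)).
    have [c0|] := boolP ((c == 0) && (d == 0)).
      move=> /(_ 1 0); case/andP: ab0 c0 => /eqP-> /eqP-> /andP [/eqP-> /eqP->].
      by rewrite !mulr0 addr0 => /(_ erefl erefl) [/eqP]; rewrite oner_eq0.
    rewrite negb_and => cd0 /(_ d (- c)).
    have : d * a + - c * b = 0 by rewrite -det0; ring.
    have : d * c + - c * d = 0 by ring.
    move=> -> -> /(_ erefl erefl) [/eqP d0 /eqP]; rewrite oppr_eq0.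
    by move: cd0; rewrite d0 orbF => /negbTE ->.
  rewrite negb_and => ab0 /(_ b (- a)).
  have : b * a + - a * b = 0 by ring.
  have : b * c + - a * d = 0 by rewrite -oppr0 -det0; ring.
  move=> -> -> /(_ erefl erefl) [/eqP b0 /eqP]; rewrite oppr_eq0.
  by move: ab0; rewrite b0 orbF => /negbTE ->.
have xdet : x * (a * d - b * c) = d * (x * a + y * b) - b * (x * c + y * d) by ring.
have ydet : y * (a * d - b * c) = a * (x * c + y * d) - c * (x * a + y * b) by ring.
rewrite row1 row2 !mulr0 subrr in xdet ydet.
by move/eqP: xdet; move/eqP: ydet; rewrite !mulf_eq0 (negbTE det) !orbF => /eqP-> /eqP->.
Qed.

Section SmallMinors.
Variables (U : finType) (R : fieldType) (C : U -> U -> R).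

Lemma lin_indep_col_IA1 s u : u != s ->
  lin_indep (col_IA [set s] C) [set u] <-> C s u != 0.
Proof.
move=> us; rewrite lin_indep_set1 /col_IA inE (negbTE us); split=> [indep|Csu x xC].
  apply/eqP => C0; suff /eqP : (1 : R) = 0 by rewrite oner_eq0.
  by apply: indep => r; case: ifP => [/set1P->|_]; rewrite ?C0 mulr0.
by have := xC s; rewrite inE eqxx => /eqP; rewrite mulf_eq0 (negbTE Csu) orbF => /eqP.
Qed.

Lemma lin_indep_col_IA2 s t u v : u != v ->
  u \notin [set s; t] -> v \notin [set s; t] ->
  lin_indep (col_IA [set s; t] C) [set u; v] <->
  C s u * C t v - C s v * C t u != 0.
Proof.
move=> uv uST vST; rewrite lin_indep_set2 // -det2_neq0.
have rowsE x y : (forall r, x * col_IA [set s; t] C u r + y * col_IA [set s; t] C v r = 0)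
    <-> x * C s u + y * C s v = 0 /\ x * C t u + y * C t v = 0.
  rewrite /col_IA (negbTE uST) (negbTE vST); split=> [rows | [rs rt] r].
    by split; [have := rows s | have := rows t]; rewrite !inE eqxx ?orbT.
  by case: ifP => [/set2P [] -> // | _]; rewrite !mulr0 addr0.
split=> indep x y; first by move=> rs rt; apply: indep; apply/rowsE.
by move/rowsE => []; apply: indep.
Qed.

End SmallMinors.

Lemma lin_indep_spans (U : finType) (R : finPzRingType) (v : U -> U -> R)
    (T T' : {set U}) :
  (forall u x, x \notin T' -> v u x = 0) -> #|T| = #|T'| -> lin_indep v T ->
  exists B : U -> U -> R, forall u x, v u x = \sum_(r in T) B r u * v r x.
Proof.
move=> vT' cardTT' indepT.
pose S := {x : U | x \in T}; pose S' := {x : U | x \in T'}.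
pose lift (b : {ffun S -> R}) x : R := if insub x is Some r then b r else 0.
have liftE b (r : S) : lift b (val r) = b r by rewrite /lift valK.
pose coords (b : {ffun S -> R}) : {ffun S' -> R} :=
  [ffun y : S' => \sum_(r in T) lift b r * v r (val y)].
have coords_inj : injective coords.
  move=> b1 b2 E; apply/ffunP => r; apply/eqP; rewrite -subr_eq0 -!liftE; apply/eqP.
  apply: (indepT (fun x => lift b1 x - lift b2 x)) (valP r) => s.
  under eq_bigr do rewrite mulrBl.
  rewrite sumrB; case: (boolP (s \in T')) => sT'.
    by have /ffunP/(_ (exist _ s sT')) := E; rewrite !ffunE /= => ->; rewrite subrr.
  by rewrite !big1 ?subrr // => u _; rewrite vT' ?mulr0.
have [|coords_inv _ invK] := inj_card_bij coords_inj.
  by rewrite !card_ffun !card_sig cardTT'.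
exists (fun r u => lift (coords_inv [ffun y : S' => v u (val y)]) r) => u x.
case: (boolP (x \in T')) => xT'; last by rewrite vT' // big1 // => r _; rewrite vT' ?mulr0.
have /ffunP/(_ (exist _ x xT')) := invK [ffun y : S' => v u (val y)].
by rewrite !ffunE.
Qed.

Section SkewRepresentations.
Variables (U : finType) (Omega : {set {set U}}).
Hypothesis HOmega : is_2partition Omega.
Local Notation bar := (bar Omega).
Implicit Types (T X Y : {set U}).

Let barT T x : Defs.transversal Omega T -> (bar x \in T) = (x \notin T).
Proof. exact: transversal_bar. Qed.

Definition skew_on (R : pzRingType) (T : {set U}) (A : U -> U -> R) :=
  {in T &, forall s t, A s (bar t) = - A t (bar s)}.

Definition lin_relation (R : pzRingType) (v : U -> U -> R) (c : U -> R) :=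
  forall s, \sum_x c x * v x s = 0.

Lemma skew_symmetric_on (R : pzRingType) (T1 T2 : {set U}) (A : U -> U -> R) :
  transversal_2tuple Omega T1 T2 -> skew_symmetric Omega T1 T2 A -> skew_on T1 A.
Proof.
case/and3P=> _ trT2 T12 skewA s t sT1 tT1.
have barT2 x : x \in T1 -> bar x \in T2.
  by move=> xT1; rewrite barT // (disjointFr T12 xT1).
by apply: skewA; rewrite ?barT2 ?same_class_bar.
Qed.

Lemma sum_notin_transversal (R : pzRingType) T (F : U -> R) :
  Defs.transversal Omega T ->
  \sum_(x | x \notin T) F x = \sum_(y in T) F (bar y).
Proof.
move=> trT; rewrite (reindex_inj (bar_inj HOmega)); apply: eq_bigl => y.
by rewrite barT ?negbK.
Qed.

Lemma subtransversal_transversal T : Defs.transversal Omega T -> subtransversal Omega T.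
Proof. by move=> trT; apply: subtransversalP => // x xT; rewrite barT ?xT. Qed.

Lemma subtransversal_swap T X : Defs.transversal Omega T -> X \subset T ->
  subtransversal Omega ((T :\: X) :|: bar @: X).
Proof.
move=> trT /subsetP XT; apply: subtransversalP => // y.
rewrite !inE (mem_imset _ _ (bar_inj HOmega)) => /orP [/andP [yX yT] | /imsetP [x xX ->]].
  by rewrite (negbTE yX) (barT _ trT) yT andbF.
have xT := XT x xX; have bxT : bar x \notin T by rewrite barT ?xT.
by rewrite barK // xX /= (contraNF (XT _) bxT).
Qed.

Lemma lin_relation_col_IA (R : pzRingType) T (A : U -> U -> R) c r :
  Defs.transversal Omega T -> lin_relation (col_IA T A) c -> r \in T ->
  c r = - \sum_(y in T) c (bar y) * A r (bar y).
Proof.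
move=> trT rel_c rT; apply/eqP; rewrite -subr_eq0 opprK; apply/eqP.
rewrite -[RHS](rel_c r) [RHS](bigID (mem T)) /= sum_col_IA_sub // rT.
rewrite (sum_notin_transversal _ trT); congr (_ + _); apply: eq_bigr => y yT.
by rewrite /col_IA rT (barT _ trT) yT.
Qed.

Lemma lin_relation_isotropic (R : comPzRingType) T (A : U -> U -> R) c d :
  Defs.transversal Omega T -> skew_on T A ->
  lin_relation (col_IA T A) c -> lin_relation (col_IA T A) d ->
  \sum_x c x * d (bar x) = 0.
Proof.
move=> trT skewA rel_c rel_d.
set S := \sum_(x in T) \sum_(y in T) c (bar y) * A x (bar y) * d (bar x).
have ST : \sum_(x in T) c x * d (bar x) = - S.
  rewrite -sumrN; apply: eq_bigr => x xT.
  by rewrite (lin_relation_col_IA trT rel_c xT) mulNr mulr_suml.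
have SnotT : \sum_(y in T) c (bar y) * d y = S.
  rewrite /S exchange_big; apply: eq_bigr => y yT.
  rewrite (lin_relation_col_IA trT rel_d yT) -sumrN mulr_sumr; apply: eq_bigr => x xT.
  by rewrite (skewA y x) // !mulrN opprK mulrCA mulrC.
rewrite (bigID (mem T)) /= ST (sum_notin_transversal _ trT).
by under eq_bigr do rewrite barK //; rewrite SnotT addNr.
Qed.

Lemma skew_on_coords (R : comPzRingType) T T' (A' B : U -> U -> R) :
  Defs.transversal Omega T -> Defs.transversal Omega T' -> skew_on T' A' ->
  (forall u x, col_IA T' A' u x = \sum_(r in T) B r u * col_IA T' A' r x) ->
  skew_on T B.
Proof.
move=> trT trT' skewA' coordsB.
pose g u x : R := if x == u then 1 else if x \in T then - B x u else 0.
have rel_g u : u \notin T -> lin_relation (col_IA T' A') (g u).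
  move=> uT s; rewrite (bigID (mem T)) /= addrC (bigD1 u) //= big1 => [|x /andP [xT xu]].
    rewrite /g eqxx mul1r addr0 coordsB -big_split /=; apply: big1 => x xT.
    rewrite (_ : x == u = false) ?xT ?mulNr ?addrN //.
    by apply: contraNF uT => /eqP <-.
  by rewrite /g (negbTE xu) (negbTE xT) mul0r.
move=> s t sT tT.
have bsT : bar s \notin T by rewrite (barT _ trT) sT.
have btT : bar t \notin T by rewrite (barT _ trT) tT.
have sbt : s != bar t by apply: contraNneq btT => <-.
have := lin_relation_isotropic trT' skewA' (rel_g _ btT) (rel_g _ bsT).
rewrite (bigD1 (bar t)) //= (bigD1 s) /=; last by rewrite sbt.
rewrite big1 ?addr0 => [|x /andP [xbt xs]]; last first.
  rewrite /g (negbTE xbt); case: (boolP (x \in T)) => xT; last by rewrite mul0r.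
  rewrite (inj_eq (bar_inj HOmega)) (negbTE xs) (barT _ trT) xT.
  by rewrite mulr0.
rewrite barK // /g !eqxx mul1r mulr1 tT sT (negbTE sbt) (_ : t == bar s = false).
  by move/eqP; rewrite -opprD oppr_eq0 addrC addr_eq0 => /eqP.
by apply: contraNF bsT => /eqP <-.
Qed.

Lemma rebase_skew_representation (R : finComPzRingType) T T' (A' : U -> U -> R) :
  Defs.transversal Omega T -> Defs.transversal Omega T' -> skew_on T' A' ->
  lin_indep (col_IA T' A') T ->
  exists2 B : U -> U -> R, skew_on T B &
    forall X, lin_indep (col_IA T' A') X <-> lin_indep (col_IA T B) X.
Proof.
move=> trT trT' skewA' indepT.
have [|B coordsB] := lin_indep_spans (@col_IA_out _ _ T' A') _ indepT.
  by rewrite !(card_transversal (transversal_is_transversal HOmega _)).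
exists B; first exact: skew_on_coords coordsB.
apply: lin_indep_coords indepT _ _ => [u r rT | u x]; first exact: col_IA_out.
case: (boolP (u \in T)) => uT; last first.
  by rewrite coordsB; apply: eq_bigr => r rT; rewrite /col_IA rT (negbTE uT).
rewrite (bigD1 u) //= big1 => [|r /andP [rT ru]].
  by rewrite /col_IA !uT eqxx mul1r addr0.
by rewrite /col_IA rT uT (negbTE ru) mul0r.
Qed.

Lemma lin_indep_swap (R : pzRingType) T X (C : U -> U -> R) :
  Defs.transversal Omega T -> X \subset T ->
  lin_indep (col_IA T C) ((T :\: X) :|: bar @: X) <-> lin_indep (col_IA X C) (bar @: X).
Proof.
move=> trT XT; apply: lin_indep_pivot; rewrite // disjoint_subset.
by apply/subsetP => _ /imsetP [x xX ->]; rewrite inE (barT _ trT) (subsetP XT).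
Qed.

End SkewRepresentations.

Lemma GF2_cases (x : GF2) : x = 0 \/ x = 1.
Proof. by case: x => [[|[|n]] lt_x2]; [left | right | ]; try exact: val_inj. Qed.

Lemma GF2_neq0E (x : GF2) : x = (x != 0)%:R.
Proof. by case: (GF2_cases x) => ->. Qed.

Lemma GF2_neq0_inj (x y : GF2) : (x != 0) = (y != 0) -> x = y.
Proof. by move=> xy; rewrite [LHS]GF2_neq0E xy -GF2_neq0E. Qed.

Lemma GF2_mulrr (x : GF2) : x * x = x.
Proof. by case: (GF2_cases x) => ->; rewrite ?mulr0 ?mulr1. Qed.

Section BinaryRepresentations.
Variables (U : finType) (Omega : {set {set U}}).
Hypothesis HOmega : is_2partition Omega.
Local Notation bar := (bar Omega).
Variables (T : {set U}) (A B : U -> U -> GF2).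
Hypotheses (trT : Defs.transversal Omega T)
  (skewA : skew_on Omega T A) (skewB : skew_on Omega T B).
Hypothesis indepAB : forall Y, subtransversal Omega Y ->
  lin_indep (col_IA T A) Y <-> lin_indep (col_IA T B) Y.

Let barT x : (bar x \in T) = (x \notin T). Proof. exact: transversal_bar. Qed.

Let indep_minorsAB (X : {set U}) : X \subset T ->
  lin_indep (col_IA X A) (bar @: X) <-> lin_indep (col_IA X B) (bar @: X).
Proof.
move=> XT; rewrite -!(lin_indep_swap HOmega _ trT XT).
exact/indepAB/(subtransversal_swap HOmega trT XT).
Qed.

Lemma skew_on_GF2_sym (C : U -> U -> GF2) :
  skew_on Omega T C -> {in T &, forall s t, C t (bar s) = C s (bar t)}.
Proof. by move=> skewC s t sT tT; rewrite skewC // oppr_pchar2 // pchar_Fp. Qed.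

Lemma diag_entry_eq s : s \in T -> A s (bar s) = B s (bar s).
Proof.
move=> sT; have := indep_minorsAB (X := [set s]).
rewrite sub1set (imset_set1 bar) => /(_ sT).
have := lin_indep_col_IA1 A (bar_neq HOmega s).
have := lin_indep_col_IA1 B (bar_neq HOmega s).
move=> eB eA AB; apply: GF2_neq0_inj.
by apply/idP/idP => ?; [apply/eB/AB/eA | apply/eA/AB/eB].
Qed.

Lemma offdiag_entry_eq s t : s \in T -> t \in T -> s != t ->
  A s (bar t) = B s (bar t).
Proof.
move=> sT tT st.
have bST x : x \in T -> bar x \notin [set s; t].
  by move=> xT; rewrite !inE; apply/negP => /orP [] /eqP bx; rewrite -bx barT xT in sT tT.
have bsbt : bar s != bar t by rewrite (inj_eq (bar_inj HOmega)).
have sub_st : [set s; t] \subset T by apply/subsetP => x /set2P [] ->.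
have := indep_minorsAB sub_st; rewrite (imsetU1 bar) (imset_set1 bar).
have := lin_indep_col_IA2 A bsbt (bST _ sT) (bST _ tT).
have := lin_indep_col_IA2 B bsbt (bST _ sT) (bST _ tT).
rewrite (skew_on_GF2_sym skewA sT tT) (skew_on_GF2_sym skewB sT tT) !GF2_mulrr.
rewrite -!diag_entry_eq //; set ad := _ * A t _ => eB eA AB.
apply: oppr_inj; apply: (addrI ad); apply: GF2_neq0_inj.
by apply/idP/idP => ?; [apply/eB/AB/eA | apply/eA/AB/eB].
Qed.

Lemma col_IA_eq_of_subtransversals u x : col_IA T A u x = col_IA T B u x.
Proof.
rewrite /col_IA; case: (boolP (x \in T)) => xT //; case: (boolP (u \in T)) => uT //.
rewrite -[u](barK HOmega); have buT : bar u \in T by rewrite barT.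
have [<-|xbu] := eqVneq x (bar u); first exact: diag_entry_eq.
exact: offdiag_entry_eq.
Qed.

End BinaryRepresentations.

Lemma Zof_subtransversal (U : finType) (Omega M : {set {set U}}) (Y : {set U}) :
  subtransversal Omega Y -> (Y \in Zof Omega M) = (Y \in M).
Proof. by move=> sY; rewrite inE sY andbT. Qed.

Lemma strongly_binary_shelter_Zof_inj (U : finType) (Omega M M' : {set {set U}}) :
  is_2partition Omega ->
  strongly_binary_shelter Omega M -> strongly_binary_shelter Omega M' ->
  Zof Omega M = Zof Omega M' -> M = M'.
Proof.
move=> HOmega [_ [T [T2 [A [tupT skewA MA]]]]] [_ [T' [T2' [A' [tupT' skewA' MA']]]]] ZMM'.
have [trT trT'] : Defs.transversal Omega T /\ Defs.transversal Omega T'.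
  by case/and3P: tupT; case/and3P: tupT'.
have indepAA' Y : subtransversal Omega Y ->
    lin_indep (col_IA T A) Y <-> lin_indep (col_IA T' A') Y.
  move=> sY; have := MA Y; have := MA' Y.
  by rewrite -(Zof_subtransversal M sY) -(Zof_subtransversal M' sY) ZMM'; tauto.
have indepT : lin_indep (col_IA T' A') T.
  by apply/(indepAA' T (subtransversal_transversal HOmega trT))/lin_indep_col_IA.
have [B skewB indepA'B] :=
  rebase_skew_representation HOmega trT trT' (skew_symmetric_on HOmega tupT' skewA') indepT.
have AB := col_IA_eq_of_subtransversals HOmega trT (skew_symmetric_on HOmega tupT skewA)
  skewB (fun Y sY => iff_trans (indepAA' Y sY) (indepA'B Y)).
apply/setP => X; apply/idP/idP.
  by move=> /MA/(eq_lin_indep X AB)/indepA'B/MA'.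
by move=> /MA'/indepA'B/(eq_lin_indep X AB)/MA.
Qed.

Theorem proposition2p13 (U : finType) (Omega : {set {set U}})
    (HOmega : is_2partition Omega) (Z : {set {set U}}) :
  strongly_binary_2matroid Omega Z ->
  exists! M : {set {set U}}, strongly_binary_shelter Omega M /\ Zof Omega M = Z.
Proof.
move=> [M [shM ZM]]; exists M; split=> // M' [shM' ZM'].
exact: strongly_binary_shelter_Zof_inj HOmega shM shM' (etrans ZM (esym ZM')).
Qed.
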